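(* Let $k\ge 10$, and consider the procedure $\mathcal{A}$ (described in the context) started on an input $(\mathcal{L},\ell,\tau)$ with $\mathrm{rank}(\mathcal{L})=n\ge k$, $\tau\ge0$ and $1\le\ell\le n-k+1$. Then the total number of invocations of $\mathcal{A}$ made during the whole recursion is at most $4^{\tau}\cdot p(n)$ for a fixed polynomial $p$ (independent of $\mathcal{L},\ell,\tau,k$).
   Context: Notation: for a lattice $\mathcal{L}$, $\mathcal{L}^*$ is its dual lattice, and for a lattice $\mathcal{M}$, $\mathcal{M}^\perp$ is the orthogonal complement of $\mathrm{span}(\mathcal{M})$; for a rank-$r$ sublattice $\mathcal{M}\subseteq \mathcal{L}^*$, $\mathcal{L}\cap\mathcal{M}^\perp$ has rank $\mathrm{rank}(\mathcal{L})-r$. Sublattices returned by $\mathcal{A}(\mathcal{L},\ell,\tau)$ have rank $\ell$. Procedure $\mathcal{A}(\mathcal{L},\ell,\tau)$, with $n:=\mathrm{rank}(\mathcal{L})$ and $n>\ell\ge1$, $\tau\ge 0$ integers: 1. Duality step: if $\max\{1,(n-k)/5\}<\ell<n/2$ or $\ell\ge n-\max\{1,(n-k)/10\}$, output $\mathcal{L}\cap\mathcal{A}(\mathcal{L}^*,n-\ell,\tau)^\perp$. 2. Base cases: (a) if $n=k$ and $\ell=1$, call an HSVP oracle on $\mathcal{L}$ and output the lattice generated by the returned vector; (b) if $\tau=0$, output the lattice generated by the first $\ell$ vectors of an LLL-reduced basis of $\mathcal{L}$. 3. Recursive step: otherwise set $\ell^*=\lceil (n-k)/20\rceil$, $b=1$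 if $\ell<n/2$ and $b=0$ otherwise, compute $\mathcal{M}:=\mathcal{A}(\mathcal{L}^*,\ell^*,\tau-b)$ and output $\mathcal{A}(\mathcal{L}\cap\mathcal{M}^\perp,\ell,\tau)$. The sequence of parameters $(n,\ell,\tau)$ of the invocations depends only on the initial parameters. *)

From mathcomp Require Import all_boot all_order all_algebra.
Set Implicit Arguments. Unset Strict Implicit. Unset Printing Implicit Defensive.
Import Order.TTheory GRing.Theory Num.Theory.

(* The call tree of procedure A depends only on the parameters (n, l, tau)
   (and the fixed block size k).  [calls k n l t N] means: the invocation
   A(L, l, t) with rank(L) = n terminates and makes N invocations in total
   (counting itself and all recursive invocations). *)

Local Open Scope ring_scope.

Definition dual_cond (k n l : nat) : bool :=
  ((Num.max 1 ((n%:Q - k%:Q) / 5%:Q) < l%:Q) && (l%:Q < n%:Q / 2%:Q))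
  || (n%:Q - Num.max 1 ((n%:Q - k%:Q) / 10%:Q) <= l%:Q).

Definition lstar (k n : nat) : nat := `|Num.ceil ((n%:Q - k%:Q) / 20%:Q)|%N.

Definition bflag (n l : nat) : nat := if l%:Q < n%:Q / 2%:Q then 1%N else 0%N.

Local Close Scope ring_scope.

Inductive calls (k : nat) : nat -> nat -> nat -> nat -> Prop :=
| calls_dual n l t N :
    dual_cond k n l ->
    calls k n (n - l) t N ->           (* A(Ldual, n - l, t), rank(Ldual) = n *)
    calls k n l t N.+1
| calls_baseA n l t :
    ~~ dual_cond k n l -> n = k -> l = 1 ->
    calls k n l t 1
| calls_baseB n l t :
    ~~ dual_cond k n l -> ~ (n = k /\ l = 1) -> t = 0 ->
    calls k n l t 1
| calls_rec n l t N1 N2 :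
    ~~ dual_cond k n l -> ~ (n = k /\ l = 1) -> t <> 0 ->
    calls k n (lstar k n) (t - bflag n l) N1 ->   (* M := A(Ldual, l*, t-b) *)
    calls k (n - lstar k n) l t N2 ->              (* A(L cap M^perp, l, t) *)
    calls k n l t (N1 + N2).+1.

(* Measure an invocation by the excess m = n - k of its rank.  A duality step
   leads to a non-dual invocation on the same rank.  A recursive step first
   calls A with the index l* = ceil(m/20), which is neither dual nor at least
   n/2, using one unit of tau exactly when l < n/2, and then an invocation of
   excess m' with 21 (m' + 1) <= 20 (m + 1) and the same tau.  Hence with
   w(m) = (m + 1)^24, so that 8 (w(m') + 2) <= 3 w(m), the number of invocations
   is at most 4^tau times w(m) for non-dual calls with l < n/2, 2 w(m) - 1 for
   the other non-dual calls and 2 w(m) for dual calls.  Termination follows by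
   induction on the excess and then on tau. *)

From mathcomp Require Import all_boot all_order all_algebra.
From mathcomp Require Import zify lra.
Import Order.TTheory GRing.Theory Num.Theory.

Set Implicit Arguments.
Unset Strict Implicit.
Unset Printing Implicit Defensive.

Definition dual_test (k n l : nat) : bool :=
  [&& 1 < l, n - k < 5 * l & 2 * l < n] || (n <= l.+1) || (10 * n <= 10 * l + (n - k)).

Section RationalConditions.
Local Open Scope ring_scope.

Lemma dual_condE k n l : (k <= n)%N -> dual_cond k n l = dual_test k n l.
Proof.
move=> le_kn; rewrite /dual_cond /dual_test -!pmulrn -natrB //.
set m := (n - k)%N.
have -> : (Num.max 1 (m%:R / 5%:R) < l%:R :> rat) = (1 < l)%N && (m < 5 * l)%N.
  by rewrite gt_max ltr1n ltr_pdivrMr ?ltr0n // -natrM ltr_nat mulnC.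
have -> : (l%:R < n%:R / 2%:R :> rat) = (2 * l < n)%N.
  by rewrite ltr_pdivlMr ?ltr0n // -natrM ltr_nat mulnC.
rewrite -andbA -orbA; congr (_ || _).
rewrite lerBlDr; case: (leP 1 (m%:R / 10%:R :> rat)) => m10.
  rewrite -(ler_pM2r (_ : 0 < 10%:R :> rat)) ?ltr0n // mulrDl mulfVK ?pnatr_eq0 //.
  rewrite -!natrM -natrD ler_nat.
  move: m10; rewrite ler_pdivlMr ?ltr0n // mul1r ler_nat; lia.
rewrite natr1 ler_nat; apply/idP/idP => [-> // | /orP[//|]].
move: m10; rewrite ltr_pdivrMr ?ltr0n // mul1r ltr_nat; lia.
Qed.

Lemma bflagE n l : bflag n l = if (2 * l < n)%N then 1%N else 0%N.
Proof. by rewrite /bflag ltr_pdivlMr ?ltr0n // -natrM ltr_nat mulnC. Qed.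

Lemma lstarE k n : (k <= n)%N -> lstar k n = ((n - k + 19) %/ 20)%N.
Proof.
move=> le_kn; rewrite /lstar -natrB //.
set m := (n - k)%N; set c := ((m + 19) %/ 20)%N.
rewrite (@ceil_def _ _ c%:Z) // intrB /= !pmulrn -[20%:Q]/(20%:R).
rewrite ltr_pdivlMr ?ler_pdivrMr ?ltr0n // mulrBl mul1r ltrBlDr -!natrM -natrD ltr_nat ler_nat.
by apply/andP; split; rewrite /c; lia.
Qed.

End RationalConditions.

Section Contraction.
Local Open Scope ring_scope.

Lemma expr24_contraction (R : realFieldType) (a b : R) :
  0 <= a -> 2 <= b -> 21 * a <= 20 * b -> 8 * (a ^+ 24 + 2) <= 3 * b ^+ 24.
Proof.
move=> a_ge0 b_ge2 ab.
have ratio3 : (20 / 21) ^+ 3 <= 7 / 8 :> R by rewrite !exprS expr0; lra.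
have ratio24 : (20 / 21) ^+ 24 <= 7 / 20 :> R.
  rewrite (exprM _ 3 8); apply: le_trans (_ : _ <= (7 / 8) ^+ 8) _.
    by apply: lerXn2r; rewrite // nnegrE ?exprn_ge0 //; lra.
  by rewrite !exprS expr0; lra.
have big_b : 80 <= b ^+ 24.
  apply: (@le_trans _ _ (2 ^+ 24)); first by rewrite !exprS expr0; lra.
  by apply: lerXn2r; rewrite ?nnegrE //; lra.
have small_a : a ^+ 24 <= 7 / 20 * b ^+ 24.
  apply: (@le_trans _ _ ((20 / 21 * b) ^+ 24)).
    by apply: lerXn2r; rewrite ?nnegrE //; lra.
  by rewrite exprMn ler_wpM2r // exprn_ge0 //; lra.
lra.
Qed.

End Contraction.

Section BlockSize.
Variable k : nat.
Hypothesis k_ge10 : 10 <= k.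

(* [l <= n - k + 1] is the range of the theorem; dualising it gives [k - 1 <= l]. *)
Definition admissible n l :=
  [/\ k <= n, 0 < l, l < n & (l <= n - k + 1) || (k - 1 <= l)].

Lemma admissible_dual n l :
  admissible n l -> dual_cond k n l -> admissible n (n - l).
Proof. by case=> le_kn ? ? ?; rewrite dual_condE // /dual_test => ?; split; lia. Qed.

Lemma nondual_dual n l :
  admissible n l -> dual_cond k n l -> ~~ dual_cond k n (n - l).
Proof. by case=> le_kn ? ? ?; rewrite !dual_condE // /dual_test; lia. Qed.

Lemma nonbase_rank_gt n l :
  admissible n l -> ~~ dual_cond k n l -> ~ (n = k /\ l = 1) -> k < n.
Proof. by case=> le_kn ? ? ?; rewrite dual_condE // /dual_test; lia. Qed.

Definition weight m := m.+1 ^ 24.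

Lemma weight_gt0 m : 0 < weight m.
Proof. by rewrite expn_gt0. Qed.

Section Split.
Variable n : nat.
Hypothesis lt_kn : k < n.

Lemma admissible_lstar : admissible n (lstar k n).
Proof. by rewrite (lstarE (ltnW lt_kn)); split; lia. Qed.

Lemma nondual_lstar : ~~ dual_cond k n (lstar k n).
Proof. by rewrite dual_condE ?(ltnW lt_kn) // /dual_test (lstarE (ltnW lt_kn)); lia. Qed.

Lemma lstar_small : 2 * lstar k n < n.
Proof. by rewrite (lstarE (ltnW lt_kn)); lia. Qed.

Lemma admissible_residual l :
  admissible n l -> ~~ dual_cond k n l -> admissible (n - lstar k n) l.
Proof.
case=> ? ? ? ?; rewrite dual_condE ?(ltnW lt_kn) // /dual_test (lstarE (ltnW lt_kn)).
by move=> ?; split; lia.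
Qed.

Lemma residual_excess : 21 * (n - lstar k n - k).+1 <= 20 * (n - k).+1.
Proof. by rewrite (lstarE (ltnW lt_kn)); lia. Qed.

Lemma weight_residual :
  8 * (weight (n - lstar k n - k) + 2) <= 3 * weight (n - k).
Proof.
rewrite /weight -(ler_nat rat) !natrM natrD !natrX.
apply: expr24_contraction; first exact: ler0n.
  by rewrite ler_nat; lia.
by rewrite -!natrM ler_nat residual_excess.
Qed.

End Split.

Definition potential n l : nat :=
  let w := weight (n - k) in
  if dual_cond k n l then 2 * w else if 2 * l < n then w else (2 * w).-1.

Lemma potential_gt0 n l : 0 < potential n l.
Proof.
have := weight_gt0 (n - k).
by rewrite /potential; case: ifP => _; [|case: ifP => _]; lia.
Qed.

Lemma potential_le n l : potential n l <= 2 * weight (n - k).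
Proof. by rewrite /potential; case: ifP => _; [|case: ifP => _]; lia. Qed.

Lemma potential_nondual n l :
  ~~ dual_cond k n l -> potential n l <= (2 * weight (n - k)).-1.
Proof.
move=> nondual.
have := weight_gt0 (n - k).
by rewrite /potential (negbTE nondual); case: ifP => _; lia.
Qed.

Lemma potential_dual n l : dual_cond k n l -> potential n l = 2 * weight (n - k).
Proof. by rewrite /potential => ->. Qed.

Lemma potential_small n l :
  ~~ dual_cond k n l -> 2 * l < n -> potential n l = weight (n - k).
Proof. by rewrite /potential => /negbTE -> ->. Qed.

Lemma potential_large n l :
  ~~ dual_cond k n l -> ~~ (2 * l < n) -> potential n l = (2 * weight (n - k)).-1.
Proof. by rewrite /potential => /negbTE -> /negbTE ->. Qed.

Lemma calls_le_potential n l t N :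
  calls k n l t N -> admissible n l -> N <= 4 ^ t * potential n l.
Proof.
elim=> {n l t N} [n l t N dual _ IH adm | n l t _ _ _ _ | n l t _ _ _ _
                 | n l t N1 N2 nondual nonbase t_neq0 _ IH1 _ IH2 adm].
- have := IH (admissible_dual adm dual).
  have := potential_nondual (nondual_dual adm dual).
  have := weight_gt0 (n - k); have : 0 < 4 ^ t by rewrite expn_gt0.
  by rewrite (potential_dual dual); nia.
- by rewrite muln_gt0 expn_gt0 potential_gt0.
- by rewrite muln_gt0 expn_gt0 potential_gt0.
- have lt_kn := nonbase_rank_gt adm nondual nonbase.
  have le_N1 := IH1 (admissible_lstar lt_kn).
  have le_N2 := IH2 (admissible_residual lt_kn adm nondual).
  have := potential_le (n - lstar k n) l; have := weight_residual lt_kn.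
  rewrite (potential_small (nondual_lstar lt_kn) (lstar_small lt_kn)) bflagE in le_N1.
  case: ifP le_N1 => small le_N1.
  + rewrite (potential_small nondual small).
    case: t t_neq0 le_N1 le_N2 {IH1 IH2} => // t _; rewrite subn1 expnS /=.
    have : 0 < 4 ^ t by rewrite expn_gt0.
    by nia.
  + rewrite (potential_large nondual (negbT small)); rewrite subn0 in le_N1.
    have : 0 < 4 ^ t by rewrite expn_gt0.
    by nia.
Qed.

Lemma calls_nondual_exists n l t :
  admissible n l -> ~~ dual_cond k n l ->
  (k < n -> 0 < t -> exists N1, calls k n (lstar k n) (t - bflag n l) N1) ->
  (k < n -> exists N2, calls k (n - lstar k n) l t N2) ->
  exists N, calls k n l t N.
Proof.
move=> adm nondual left right.
have [/andP[/eqP n_k /eqP l_1]|not_base] := boolP ((n == k) && (l == 1)).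
  by exists 1; apply: calls_baseA.
have nonbase : ~ (n = k /\ l = 1).
  by move=> [n_k l_1]; rewrite n_k l_1 !eqxx in not_base.
have [t0|t_gt0] := posnP t; first by exists 1; apply: calls_baseB.
have lt_kn := nonbase_rank_gt adm nondual nonbase.
have [N1 calls1] := left lt_kn t_gt0; have [N2 calls2] := right lt_kn.
by exists (N1 + N2).+1; apply: calls_rec => //; lia.
Qed.

Lemma calls_exists n l t : admissible n l -> exists N, calls k n l t N.
Proof.
move: {2}(n - k) (leqnn (n - k)) => m; elim/ltn_ind: m n l t => m IHm.
have residual n l t : n - k <= m -> admissible n l -> ~~ dual_cond k n l -> k < n ->
    exists N2, calls k (n - lstar k n) l t N2.
  move=> le_m adm nondual lt_kn; apply: (IHm (n - lstar k n - k)) => //.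
    by have := residual_excess lt_kn; lia.
  exact: admissible_residual.
move=> n l t; elim/ltn_ind: t n l => t IHt.
have small_case n l : n - k <= m -> admissible n l -> ~~ dual_cond k n l -> 2 * l < n ->
    exists N, calls k n l t N.
  move=> le_m adm nondual small.
  apply: calls_nondual_exists => // [lt_kn t_gt0|]; last exact: residual.
  by rewrite bflagE small; apply: IHt => //; [lia | exact: admissible_lstar].
have nondual_case n l : n - k <= m -> admissible n l -> ~~ dual_cond k n l ->
    exists N, calls k n l t N.
  move=> le_m adm nondual; case small: (2 * l < n); first exact: small_case.
  apply: calls_nondual_exists => // [lt_kn _|]; last exact: residual.
  rewrite bflagE small subn0.
  by apply: small_case; [|exact: admissible_lstar|exact: nondual_lstar|exact: lstar_small].
move=> n l le_m adm; have [dual|] := boolP (dual_cond k n l); last exact: nondual_case.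
have [N calls_dual_child] :=
  nondual_case n (n - l) le_m (admissible_dual adm dual) (nondual_dual adm dual).
by exists N.+1; apply: calls_dual.
Qed.

Lemma calls_le_rank_power n l t N :
  calls k n l t N -> admissible n l -> N <= 4 ^ t * (2 * n.+1 ^ 24).
Proof.
move=> calls_N adm; apply: leq_trans (calls_le_potential calls_N adm) _.
rewrite leq_mul2l; apply/orP; right; apply: leq_trans (potential_le n l) _.
by rewrite leq_mul2l leq_exp2r // ltnS leq_subr orbT.
Qed.

End BlockSize.

Theorem mainTheorem3 :
  exists p : {poly rat},
  forall k n l t : nat,
    (10 <= k)%N -> (k <= n)%N -> (1 <= l)%N -> (l <= n - k + 1)%N ->
    (exists N, calls k n l t N) /\
    (forall N, calls k n l t N -> (N%:R <= 4%:R ^+ t * p.[n%:R])%R).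
Proof.
exists (('X + 1) ^+ 24 *+ 2)%R => k n l t k_ge10 le_kn l_gt0 le_l.
have adm : admissible k n l by split; lia.
split=> [|N calls_N]; first exact: calls_exists.
have := calls_le_rank_power k_ge10 calls_N adm.
rewrite -(ler_nat rat) hornerMn horner_exp hornerD hornerX hornerC natr1.
by rewrite !natrM !natrX mulr_natl.
Qed.
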